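(* Let $1\le k\le s-1$, let $t=\binom{a_1}{b_1}\cdots\binom{a_k}{b_k}\in B(k\varpi_2)$, and let $1\le i\le k-1$ be such that both $b_i\le\bar a_i\le b_{i+1}$ and $a_i\le\bar b_{i+1}\le a_{i+1}$ hold. Then inserting $s-k$ columns $\binom{a_i}{\bar a_i}$ between columns $i$ and $i+1$ of $t$ gives the same tableau as inserting $s-k$ columns $\binom{\bar b_{i+1}}{b_{i+1}}$ between columns $i$ and $i+1$ of $t$.
   Context: Let $n\ge4$. Alphabet: $1<2<\dots<n-1<\{n,\bar n\}<\overline{n-1}<\dots<\bar2<\bar1$, a partial order in which $n$ and $\bar n$ are incomparable; set $\bar{\bar i}=i$ for unbarred $i$. A tableau of shape $(k,k)$ is a sequence of $k$ columns, column $j$ with top entry $a_j$ and bottom entry $b_j$, written $\binom{a_1}{b_1}\cdots\binom{a_k}{b_k}$ ($\binom{x}{y}$ denotes a column, not a binomial coefficient). $B(k\varpi_2)$ is the set of tableaux of shape $(k,k)$ such that: (C1) $a_j\le a_{j+1}$ and $b_j\le b_{j+1}$ for all $j$; (C2) $b_j\not\le a_j$; (C3) no $j$ and letter $x$ with $a_j=a_{j+1}=x$, $b_{j+1}=\bar x$, and no $j,x$ with $a_j=x$, $b_j=b_{j+1}=\bar x$; (C4) no $j<j'$ with columns $j,j'$ equal to $\binom{n-1}{n},\binom{n}{\overline{n-1}}$ respectively, nor to $\binom{n-1}{\bar n},\binom{\bar n}{\overline{n-1}}$; (C5) no column $\binom{1}{\bar1}$. *)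

From mathcomp Require Import all_boot.
Set Implicit Arguments. Unset Strict Implicit. Unset Printing Implicit Defensive.

(* Letters of the type-D_n crystal alphabet:
   (false, i) = unbarred letter i, (true, i) = barred letter \bar i, 1 <= i <= n. *)
Definition letter := (bool * nat)%type.
Definition unb (i : nat) : letter := (false, i).
Definition brd (i : nat) : letter := (true, i).
Definition valid_letter (n : nat) (x : letter) : bool := (1 <= x.2 <= n).

Definition bar (x : letter) : letter := (~~ x.1, x.2).

(* position in the chain 1 < 2 < ... < n-1 < {n, \bar n} < \bar{n-1} < ... < \bar 1 *)
Definition lrank (n : nat) (x : letter) : nat :=
  if x.1 then (2 * n + 1 - x.2) else x.2.

Definition lle (n : nat) (x y : letter) : bool :=
  (x == y) || ((lrank n x < lrank n y) && ~~ ((x == unb n) && (y == brd n))).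

Definition column := (letter * letter)%type.
Definition dcol : column := (unb 0, unb 0).

(* 1-indexed access to columns and entries *)
Definition colj (t : seq column) (j : nat) : column := nth dcol t j.-1.
Definition topj (t : seq column) (j : nat) : letter := (colj t j).1.
Definition botj (t : seq column) (j : nat) : letter := (colj t j).2.

Definition inB (n k : nat) (t : seq column) : Prop :=
  size t = k /\
      (forall j, 1 <= j <= k -> valid_letter n (topj t j) && valid_letter n (botj t j)) /\
      (forall j, 1 <= j < k ->
         lle n (topj t j) (topj t j.+1) && lle n (botj t j) (botj t j.+1)) /\
      (forall j, 1 <= j <= k -> ~~ lle n (botj t j) (topj t j)) /\
      (forall j x, 1 <= j < k ->
         ~ (topj t j = x /\ topj t j.+1 = x /\ botj t j.+1 = bar x) /\
         ~ (topj t j = x /\ botj t j = bar x /\ botj t j.+1 = bar x)) /\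
      (forall j j', 1 <= j -> j < j' -> j' <= k ->
         ~ (colj t j = (unb n.-1, unb n) /\ colj t j' = (unb n, brd n.-1)) /\
         ~ (colj t j = (unb n.-1, brd n) /\ colj t j' = (brd n, brd n.-1))) /\
      (forall j, 1 <= j <= k -> colj t j <> (unb 1, brd 1)).

Definition insert_cols (t : seq column) (i m : nat) (c : column) : seq column :=
  take i t ++ nseq m c ++ drop i t.

(* Conjugation x |-> \bar x reverses the order on letters, so the hypotheses
   [\bar a_i <= b_(i+1)] and [a_i <= \bar b_(i+1)] together say
   [\bar b_(i+1) <= a_i <= \bar b_(i+1)]; by antisymmetry [a_i = \bar b_(i+1)],
   and the two inserted columns coincide. *)
From mathcomp Require Import all_boot.
From mathcomp Require Import zify.

Set Implicit Arguments.
Unset Strict Implicit.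
Unset Printing Implicit Defensive.

Lemma barK : involutive bar.
Proof. by case=> b i; rewrite /bar /= negbK. Qed.

Lemma lle_anti (n : nat) (x y : letter) : lle n x y -> lle n y x -> x = y.
Proof.
rewrite /lle => /orP[/eqP //|/andP[lt_xy _]] /orP[/eqP -> //|/andP[lt_yx _]].
by move: (ltn_trans lt_xy lt_yx); rewrite ltnn.
Qed.

Lemma lle_bar (n : nat) (x y : letter) :
  valid_letter n x -> valid_letter n y -> lle n (bar x) (bar y) = lle n y x.
Proof.
case: x => [bx ix]; case: y => [by_ iy].
rewrite /valid_letter /lle /bar /lrank /unb /brd /=.
by case: bx; case: by_; rewrite /= ?xpair_eqE /= => vx vy;
  case: (ix =P iy) => [->|ne]; rewrite ?eqxx //=; lia.
Qed.

Lemma eq_bar_of_lle (n : nat) (x y : letter) :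
  valid_letter n x -> valid_letter n y ->
  lle n (bar x) y -> lle n x (bar y) -> x = bar y.
Proof.
move=> vx vy le_barx_y le_x_bary; apply: lle_anti le_x_bary _.
by rewrite -lle_bar // barK.
Qed.

Theorem lemma4p9 (n s k i : nat) (t : seq column) :
  4 <= n -> 1 <= k -> k <= s - 1 -> inB n k t ->
  1 <= i -> i <= k - 1 ->
  lle n (botj t i) (bar (topj t i)) -> lle n (bar (topj t i)) (botj t i.+1) ->
  lle n (topj t i) (bar (botj t i.+1)) -> lle n (bar (botj t i.+1)) (topj t i.+1) ->
  insert_cols t i (s - k) (topj t i, bar (topj t i)) =
  insert_cols t i (s - k) (bar (botj t i.+1), botj t i.+1).
Proof.
move=> _ k_gt0 _ [_ [t_valid _]] i_gt0 i_lt_k _ le_bara_b le_a_barb _.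
have /andP[va _] := t_valid i ltac:(lia).
have /andP[_ vb] := t_valid i.+1 ltac:(lia).
by rewrite (eq_bar_of_lle va vb le_bara_b le_a_barb) barK.
Qed.
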